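(* Let $A\in\mathbb{R}^{n\times n}$, $B\in\mathbb{R}^{n\times m}$, $E\in\mathbb{R}^{n\times z}$, $C\in\mathbb{R}^{q\times n}$, $D\in\mathbb{R}^{q\times m}$, let $\gamma\ge 0$, and let $\mathcal{S}\subseteq\mathbb{R}^{m\times n}$ be a subspace with representation matrix $S=[S_1\ \cdots\ S_k]$. Suppose there exist $P\in\mathbb{S}^n$, $Q\in\mathbb{S}^q$, $R\in\Upsilon(S)$ and $L\in\mathcal{S}$ such that \[ \begin{bmatrix} P-EE^\top & AR+BL\\ (AR+BL)^\top & R+R^\top-P\end{bmatrix}\succ 0,\qquad \begin{bmatrix} Q & CR+DL\\ (CR+DL)^\top & R+R^\top-P\end{bmatrix}\succ 0, \] \[ P\succ 0,\qquad \operatorname{Tr}(Q)\le\gamma^2 . \] Then $R$ is nonsingular and $K=LR^{-1}$ belongs to $\mathcal{S}$ and is a $\gamma$-suboptimal $H_2$ controller for the system $x(t+1)=Ax(t)+Bu(t)+E\xi(t)$, $y(t)=Cx(t)+Du(t)$.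
   Context: Consider the discrete-time system $x(t+1)=Ax(t)+Bu(t)+E\xi(t)$, $y(t)=Cx(t)+Du(t)$ with state $x\in\mathbb{R}^n$, input $u\in\mathbb{R}^m$, exogenous input $\xi\in\mathbb{R}^z$, output $y\in\mathbb{R}^q$. For a static feedback $u=Kx$, $K\in\mathbb{R}^{m\times n}$, the closed loop is $x(t+1)=(A+BK)x(t)+E\xi(t)$, $y(t)=(C+DK)x(t)$; let $G_K(z)$ denote its transfer function from $\xi$ to $y$. $K$ is called a $\gamma$-suboptimal $H_2$ controller if $\|G_K(z)\|_{H_2}\le\gamma$. $\mathbb{S}^n$ denotes the real symmetric $n\times n$ matrices. If $S_1,\dots,S_k\in\mathbb{R}^{m\times n}$ form a basis of the subspace $\mathcal{S}$, the matrix $S=[S_1\ S_2\ \cdots\ S_k]\in\mathbb{R}^{m\times nk}$ is a representation matrix of $\mathcal{S}$, and $\Upsilon(S):=\{R\in\mathbb{R}^{n\times n}\mid \exists\Lambda\in\mathbb{S}^k:\ S(I_k\otimes R)=S(\Lambda\otimes I_n)\}$, where $\otimes$ is the Kronecker product. *)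

From HB Require Import structures.
From mathcomp Require Import all_boot all_order all_algebra.
From mathcomp Require Import all_classical all_reals all_analysis.
Set Implicit Arguments. Unset Strict Implicit. Unset Printing Implicit Defensive.
Import Order.TTheory GRing.Theory Num.Theory.
Local Open Scope ring_scope.

Section Defs.
Variable R : realType.

(* decompose an index of 'I_(a*b) into the pair (i, j) with index i*b + j
   (row-major, the standard Kronecker convention; inverse of mxvec_index). *)
Definition unpair (a b : nat) (r : 'I_(a * b)) : 'I_a * 'I_b :=
  enum_val (cast_ord (esym (mxvec_cast a b)) r).

Definition kron (p1 q1 p2 q2 : nat) (A : 'M[R]_(p1, q1)) (B : 'M[R]_(p2, q2))
  : 'M[R]_(p1 * p2, q1 * q2) :=
  \matrix_(r < p1 * p2, c < q1 * q2)
    (A (unpair r).1 (unpair c).1 * B (unpair r).2 (unpair c).2).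

(* representation matrix S = [S_1 S_2 ... S_k] in R^{m x nk} *)
Definition repmx (m n k : nat) (S : 'I_k -> 'M[R]_(m, n)) : 'M[R]_(m, k * n) :=
  \matrix_(r < m, c < k * n) S (unpair c).1 r (unpair c).2.

Definition lin_indep (m n k : nat) (S : 'I_k -> 'M[R]_(m, n)) : Prop :=
  forall c : 'I_k -> R, \sum_(i < k) c i *: S i = 0 -> forall i, c i = 0.

Definition in_span (m n k : nat) (S : 'I_k -> 'M[R]_(m, n)) (L : 'M[R]_(m, n)) : Prop :=
  exists c : 'I_k -> R, L = \sum_(i < k) c i *: S i.

Definition Upsilon (m n k : nat) (S : 'I_k -> 'M[R]_(m, n)) (X : 'M[R]_n) : Prop :=
  exists Lam : 'M[R]_k, Lam^T = Lam /\
    repmx S *m kron (1%:M : 'M[R]_k) X = repmx S *m kron Lam (1%:M : 'M[R]_n).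

Definition is_symmx (p : nat) (M : 'M[R]_p) : Prop := M^T = M.

Definition posdef (p : nat) (M : 'M[R]_p) : Prop :=
  M^T = M /\ forall x : 'cV[R]_p, x != 0 -> 0 < (x^T *m M *m x) 0 0.

(* Markov parameters of G_K(z) = (C+DK)(zI - (A+BK))^{-1} E:
   G_K(z) = sum_{t>=0} h_t z^{-(t+1)} with h_t = (C+DK)(A+BK)^t E *)
Definition markov (n m z q : nat) (A : 'M[R]_n) (B : 'M[R]_(n, m)) (E : 'M[R]_(n, z))
  (C : 'M[R]_(q, n)) (D : 'M[R]_(q, m)) (K : 'M[R]_(m, n)) (t : nat) : 'M[R]_(q, z) :=
  (C + D *m K) *m (A + B *m K) ^+ t *m E.

(* squared H2 norm (extended real, +oo if infinite):
   ||G_K||_{H2}^2 = (1/2pi) int tr(G^* G) = sum_t ||h_t||_F^2 *)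
Definition H2_norm_sq (n m z q : nat) (A : 'M[R]_n) (B : 'M[R]_(n, m)) (E : 'M[R]_(n, z))
  (C : 'M[R]_(q, n)) (D : 'M[R]_(q, m)) (K : 'M[R]_(m, n)) : \bar R :=
  (\sum_(0 <= t <oo) (\tr ((markov A B E C D K t)^T *m markov A B E C D K t))%:E)%E.

Definition H2_suboptimal (n m z q : nat) (A : 'M[R]_n) (B : 'M[R]_(n, m)) (E : 'M[R]_(n, z))
  (C : 'M[R]_(q, n)) (D : 'M[R]_(q, m)) (K : 'M[R]_(m, n)) (gamma : R) : Prop :=
  (H2_norm_sq A B E C D K <= (gamma ^+ 2)%:E)%E.

End Defs.

From Pilot Require Import Defs.
From HB Require Import structures.
From mathcomp Require Import all_boot all_order all_algebra.
From mathcomp Require Import all_classical all_reals all_analysis.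
From mathcomp Require Import lra.
Import Order.TTheory GRing.Theory Num.Theory.
Local Open Scope ring_scope.

(** Write [W = X + X^T - P]. Since [(X - P)^T P^-1 (X - P)] is positive
    semidefinite, [W <= X^T P^-1 X]; evaluating each LMI at [[v; w]] with
    [w = - X^-1 P K^T v] (a Schur complement) then gives, for [K = L X^-1],
    the Lyapunov inequality [(A + BK) P (A + BK)^T <= P - E E^T] and the output
    bound [(C + DK) P (C + DK)^T <= Q].  Iterating the former shows that the
    finite-horizon controllability Gramian is below [P], so every partial sum
    of the H2 series is at most [tr ((C + DK) P (C + DK)^T) <= tr Q <= gamma^2].
    [X] is nonsingular because [X v = 0] would give [v^T W v = - v^T P v < 0].
    Finally the condition [X \in Upsilon(S)] says [S_i X = sum_j Lam_ji S_j], so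
    right multiplication by [X] is an injective, hence bijective, endomorphism
    of the span of the [S_i], and [L X^-1] stays in that span. *)

Set Implicit Arguments. Unset Strict Implicit.

Lemma unitmx_ker0 (F : fieldType) n (A : 'M[F]_n) :
  (forall v : 'cV_n, A *m v = 0 -> v = 0) -> A \in unitmx.
Proof.
move=> ker0; rewrite -unitmx_tr -row_free_unit; apply: inj_row_free => u uA0.
apply: trmx_inj; rewrite trmx0; apply: ker0.
by rewrite -[A]trmxK -trmx_mul uA0 trmx0.
Qed.

Section RepresentationMatrix.
Variables (R : realType) (m n k : nat) (S : 'I_k -> 'M[R]_(m, n)).

Lemma unpair_mxvec_index a b (i : 'I_a) (j : 'I_b) : unpair (mxvec_index i j) = (i, j).
Proof. by rewrite /unpair /mxvec_index cast_ordK enum_rankK. Qed.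

Lemma repmx_mulmxE (M : 'M[R]_(k * n)) r c :
  (repmx S *m M) r c = \sum_a \sum_b S a r b * M (mxvec_index a b) c.
Proof.
rewrite mxE pair_bigA /= (reindex (fun p : 'I_k * 'I_n => mxvec_index p.1 p.2)) /=.
  by apply: eq_bigr => -[a b] _; rewrite mxE unpair_mxvec_index.
exists (@unpair k n) => [[a b] _ | s _]; first by rewrite unpair_mxvec_index.
by case: (mxvec_indexP s) => a b; rewrite unpair_mxvec_index.
Qed.

Lemma kron_mxvec_indexE p1 q1 p2 q2 (A : 'M[R]_(p1, q1)) (B : 'M[R]_(p2, q2)) a b i j :
  kron A B (mxvec_index a b) (mxvec_index i j) = A a i * B b j.
Proof. by rewrite mxE !unpair_mxvec_index. Qed.

Lemma repmx_mul_kron1l (X : 'M[R]_n) r i c :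
  (repmx S *m kron 1%:M X) r (mxvec_index i c) = (S i *m X) r c.
Proof.
rewrite repmx_mulmxE (bigD1 i) //= [X in _ + X]big1 => [|a /negbTE neq_ai]; last first.
  by apply: big1 => b _; rewrite kron_mxvec_indexE mxE neq_ai mul0r mulr0.
rewrite addr0 mxE; apply: eq_bigr => b _.
by rewrite kron_mxvec_indexE mxE eqxx mul1r.
Qed.

Lemma repmx_mul_kron1r (Lam : 'M[R]_k) r i c :
  (repmx S *m kron Lam 1%:M) r (mxvec_index i c) = (\sum_j Lam j i *: S j) r c.
Proof.
rewrite repmx_mulmxE summxE; apply: eq_bigr => a _.
rewrite (bigD1 c) //= big1 => [|b /negbTE neq_bc]; last first.
  by rewrite kron_mxvec_indexE mxE neq_bc !mulr0.
by rewrite addr0 kron_mxvec_indexE !mxE eqxx mulr1 mulrC.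
Qed.

Lemma Upsilon_mulmx (X : 'M[R]_n) :
  Upsilon S X -> exists Lam : 'M[R]_k, forall i, S i *m X = \sum_j Lam j i *: S j.
Proof.
case=> Lam [_ eqSX]; exists Lam => i; apply/matrixP => r c.
by rewrite -repmx_mul_kron1l eqSX repmx_mul_kron1r.
Qed.

Definition lincomb (c : 'cV[R]_k) : 'M[R]_(m, n) := \sum_i c i 0 *: S i.

Lemma in_spanP L : in_span S L <-> exists c, L = lincomb c.
Proof.
split=> [[c ->]|[c ->]]; last by exists (fun i => c i 0).
by exists (\col_i c i); apply: eq_bigr => i _; rewrite mxE.
Qed.

Lemma lincomb0 : lincomb 0 = 0.
Proof. by apply: big1 => i _; rewrite mxE scale0r. Qed.

Lemma lincomb_eq0 c : lin_indep S -> lincomb c = 0 -> c = 0.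
Proof. by move=> indep c0; apply/matrixP => i j; rewrite ord1 mxE (indep _ c0). Qed.

Lemma lincomb_mulmx (X : 'M[R]_n) (Lam : 'M[R]_k) :
  (forall i, S i *m X = \sum_j Lam j i *: S j) ->
  forall c, lincomb c *m X = lincomb (Lam *m c).
Proof.
move=> SX c; rewrite /lincomb mulmx_suml.
under eq_bigr => i _ do rewrite -scalemxAl SX scaler_sumr.
rewrite exchange_big; apply: eq_bigr => j _ /=.
by rewrite mxE scaler_suml; apply: eq_bigr => i _; rewrite scalerA mulrC.
Qed.

Lemma in_span_mulmx_invmx (X : 'M[R]_n) L :
  lin_indep S -> Upsilon S X -> X \in unitmx -> in_span S L -> in_span S (L *m invmx X).
Proof.
move=> indep /Upsilon_mulmx[Lam /lincomb_mulmx combX] unitX /in_spanP[c ->].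
have unitLam : Lam \in unitmx.
  apply: unitmx_ker0 => d Lamd0; apply: lincomb_eq0 indep _.
  by rewrite -(mulmxK unitX (lincomb d)) combX Lamd0 lincomb0 mul0mx.
apply/in_spanP; exists (invmx Lam *m c).
by rewrite -[c in LHS](mulKVmx unitLam) -combX mulmxK.
Qed.

End RepresentationMatrix.

Section QuadraticForms.
Variable R : realType.

Definition bilin a b (x : 'cV[R]_a) (M : 'M[R]_(a, b)) (y : 'cV[R]_b) : R :=
  (x^T *m M *m y) 0 0.

Definition psdmx p (M : 'M[R]_p) := forall x, 0 <= bilin x M x.

Definition lemx p (M N : 'M[R]_p) := forall x, bilin x M x <= bilin x N x.

Section Bilin.
Variables a b : nat.
Implicit Types (x : 'cV[R]_a) (y : 'cV[R]_b) (M N : 'M[R]_(a, b)).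

Lemma bilinT x M y : bilin x M y = bilin y M^T x.
Proof. by rewrite /bilin -[x^T *m M *m y]trmxK mxE !trmx_mul !trmxK mulmxA. Qed.

Lemma bilinDl x x' M y : bilin (x + x') M y = bilin x M y + bilin x' M y.
Proof. by rewrite /bilin linearD !mulmxDl mxE. Qed.

Lemma bilinNl x M y : bilin (- x) M y = - bilin x M y.
Proof. by rewrite /bilin linearN !mulNmx mxE. Qed.

Lemma bilinDr x M y y' : bilin x M (y + y') = bilin x M y + bilin x M y'.
Proof. by rewrite /bilin mulmxDr mxE. Qed.

Lemma bilinNr x M y : bilin x M (- y) = - bilin x M y.
Proof. by rewrite /bilin mulmxN mxE. Qed.

Lemma bilinDm x M N y : bilin x (M + N) y = bilin x M y + bilin x N y.
Proof. by rewrite /bilin mulmxDr mulmxDl mxE. Qed.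

Lemma bilinNm x M y : bilin x (- M) y = - bilin x M y.
Proof. by rewrite /bilin mulmxN mulNmx mxE. Qed.

Lemma bilinBm x M N y : bilin x (M - N) y = bilin x M y - bilin x N y.
Proof. by rewrite bilinDm bilinNm. Qed.

Lemma bilin0l M y : bilin 0 M y = 0.
Proof. by rewrite /bilin trmx0 !mul0mx mxE. Qed.

End Bilin.

Lemma bilinMl a b c (N : 'M[R]_(c, a)) x (M : 'M[R]_(c, b)) y :
  bilin (N *m x) M y = bilin x (N^T *m M) y.
Proof. by rewrite /bilin trmx_mul !mulmxA. Qed.

Lemma bilinMr a b c x (M : 'M[R]_(a, b)) (N : 'M[R]_(b, c)) y :
  bilin x M (N *m y) = bilin x (M *m N) y.
Proof. by rewrite /bilin !mulmxA. Qed.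

Lemma bilin_conj a b (T : 'M[R]_(a, b)) (M : 'M[R]_b) x :
  bilin x (T *m M *m T^T) x = bilin (T^T *m x) M (T^T *m x).
Proof. by rewrite bilinMl bilinMr trmxK. Qed.

Lemma bilin_sum a b I (r : seq I) (P : pred I) x (F : I -> 'M[R]_(a, b)) y :
  bilin x (\sum_(i <- r | P i) F i) y = \sum_(i <- r | P i) bilin x (F i) y.
Proof. by rewrite /bilin mulmx_sumr mulmx_suml summxE. Qed.

Lemma bilin_delta p (M : 'M[R]_p) i j : bilin (delta_mx i 0) M (delta_mx j 0) = M i j.
Proof. by rewrite /bilin trmx_delta -rowE -colE !mxE. Qed.

Lemma bilin_block p r (M : 'M[R]_p) (G : 'M[R]_(p, r)) (W : 'M[R]_r) v w :
  bilin (col_mx v w) (block_mx M G G^T W) (col_mx v w) =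
  bilin v M v + 2 * bilin v G w + bilin w W w.
Proof.
have GT : bilin w G^T v = bilin v G w by rewrite bilinT trmxK.
move: GT; rewrite /bilin tr_col_mx mul_row_block mul_row_col !mulmxDl !mxE; lra.
Qed.

Lemma posdef_gt0 p (M : 'M[R]_p) x : posdef M -> x != 0 -> 0 < bilin x M x.
Proof. by case=> _; apply. Qed.

Lemma posdef_psd p (M : 'M[R]_p) : posdef M -> psdmx M.
Proof.
move=> pdM x; have [->|x0] := eqVneq x 0; first by rewrite bilin0l.
exact/ltW/posdef_gt0.
Qed.

Lemma posdef_unitmx p (M : 'M[R]_p) : posdef M -> M \in unitmx.
Proof.
move=> pdM; apply: unitmx_ker0 => v Mv0; apply/eqP; apply: contraT => v0.
by have := posdef_gt0 pdM v0; rewrite /bilin -mulmxA Mv0 mulmx0 mxE ltxx.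
Qed.

Lemma posdef_invmx_psd p (M : 'M[R]_p) : posdef M -> psdmx (invmx M).
Proof.
move=> pdM x; have [symM _] := pdM; have unitM := posdef_unitmx pdM.
have -> : invmx M = (invmx M)^T *m M *m invmx M.
  by rewrite trmx_inv symM mulVmx // mul1mx.
by rewrite -bilinMr -bilinMl; apply: posdef_psd.
Qed.

Lemma bilin_symmetrized_le n (P X : 'M[R]_n) w : posdef P ->
  bilin w (X + X^T - P) w <= bilin (X *m w) (invmx P) (X *m w).
Proof.
move=> pdP; have [symP _] := pdP; have unitP := posdef_unitmx pdP.
have := posdef_invmx_psd pdP (X *m w - P *m w).
rewrite bilinDl bilinNl !bilinDr !bilinNr !bilinMl !bilinMr symP.
rewrite !mulmxKV // mulmxV // mul1mx bilinBm bilinDm.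
rewrite [bilin w X^T w]bilinT trmxK; lra.
Qed.

Lemma lemx_of_block_psd p n (M : 'M[R]_p) (G : 'M[R]_(p, n)) (P X : 'M[R]_n) :
  posdef P -> X \in unitmx -> psdmx (block_mx M G G^T (X + X^T - P)) ->
  lemx (G *m invmx X *m P *m (G *m invmx X)^T) M.
Proof.
move=> pdP unitX psd_blk v; have [symP _] := pdP.
set K := G *m invmx X; set w := - (invmx X *m (P *m K^T *m v)).
have cross : bilin v G w = - bilin v (K *m P *m K^T) v.
  by rewrite bilinNr /K /bilin !mulmxA.
have corner : bilin (X *m w) (invmx P) (X *m w) = bilin v (K *m P *m K^T) v.
  rewrite mulmxN mulKVmx // bilinNl bilinNr opprK bilinMl bilinMr.
  by rewrite trmx_mul symP trmxK !mulmxA mulmxKV ?posdef_unitmx.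
have := psd_blk (col_mx v w); rewrite bilin_block cross.
have := bilin_symmetrized_le X w pdP; rewrite corner; lra.
Qed.

Lemma unitmx_of_block_posdef p n (M : 'M[R]_p) (G : 'M[R]_(p, n)) (P X : 'M[R]_n) :
  posdef P -> posdef (block_mx M G G^T (X + X^T - P)) -> X \in unitmx.
Proof.
move=> pdP pd_blk; apply: unitmx_ker0 => v Xv0; apply/eqP; apply: contraT => v0.
have : col_mx (0 : 'cV[R]_p) v != 0 by rewrite col_mx_eq0 negb_and v0 orbT.
have vXv0 : bilin v X v = 0 by rewrite /bilin -mulmxA Xv0 mulmx0 mxE.
move/(posdef_gt0 pd_blk); rewrite bilin_block !bilin0l bilinBm bilinDm.
rewrite [bilin v X^T v]bilinT trmxK vXv0.
have := posdef_gt0 pdP v0; lra.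
Qed.

Lemma lemx_trace p (M N : 'M[R]_p) : lemx M N -> \tr M <= \tr N.
Proof. by move=> MN; apply: ler_sum => i _; rewrite -!bilin_delta. Qed.

Lemma lemx_conj p r (T : 'M[R]_(r, p)) (M N : 'M[R]_p) :
  lemx M N -> lemx (T *m M *m T^T) (T *m N *m T^T).
Proof. by move=> MN x; rewrite !bilin_conj. Qed.

Lemma lemx_lyapunov_sum n (F H P : 'M[R]_n) :
  psdmx P -> lemx (F *m P *m F^T) (P - H) ->
  forall N, lemx (\sum_(t < N) F ^+ t *m H *m (F ^+ t)^T) P.
Proof.
move=> psdP FP N x.
suff : bilin x (\sum_(t < N) F ^+ t *m H *m (F ^+ t)^T) x +
       bilin x (F ^+ N *m P *m (F ^+ N)^T) x <= bilin x P x.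
  by rewrite bilin_conj; have := psdP ((F ^+ N)^T *m x); lra.
elim: N => [|N IH]; first by rewrite bilin_sum big_ord0 expr0 trmx1 mul1mx mulmx1 add0r.
have -> : F ^+ N.+1 *m P *m (F ^+ N.+1)^T = F ^+ N *m (F *m P *m F^T) *m (F ^+ N)^T.
  by rewrite exprSr -mulmxE trmx_mul !mulmxA.
apply: le_trans IH; rewrite !bilin_sum big_ord_recr /= -addrA lerD2l.
have := FP ((F ^+ N)^T *m x); rewrite !bilin_conj bilinBm; lra.
Qed.

End QuadraticForms.

Section H2Bound.
Variable R : realType.

Lemma tr_mulTmx_ge0 p r (M : 'M[R]_(p, r)) : 0 <= \tr (M^T *m M).
Proof.
apply: sumr_ge0 => i _; rewrite mxE; apply: sumr_ge0 => j _.
by rewrite mxE -expr2 sqr_ge0.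
Qed.

Lemma nneseries_le_of_partial (u : nat -> R) b : (forall t, 0 <= u t) ->
  (forall N, \sum_(t < N) u t <= b) -> (\sum_(0 <= t <oo) (u t)%:E <= b%:E)%E.
Proof.
move=> u_ge0 partial_le; apply: lime_le.
  by apply: is_cvg_nneseries => t _ _; rewrite lee_fin.
by apply: nearW => N /=; rewrite sumEFin big_mkord lee_fin.
Qed.

Lemma H2_suboptimal_of_gramian n m z q (A : 'M[R]_n) (B : 'M[R]_(n, m))
    (E : 'M[R]_(n, z)) (C : 'M[R]_(q, n)) (D : 'M[R]_(q, m)) (K : 'M[R]_(m, n))
    (P : 'M[R]_n) (Q : 'M[R]_q) gamma :
  psdmx P ->
  lemx ((A + B *m K) *m P *m (A + B *m K)^T) (P - E *m E^T) ->
  lemx ((C + D *m K) *m P *m (C + D *m K)^T) Q ->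
  \tr Q <= gamma ^+ 2 -> H2_suboptimal A B E C D K gamma.
Proof.
set AK := A + B *m K; set CK := C + D *m K => psdP lyap output trQ.
apply: nneseries_le_of_partial => [t|N]; first exact: tr_mulTmx_ge0.
have -> : \sum_(t < N) \tr ((Defs.markov A B E C D K t)^T *m Defs.markov A B E C D K t) =
    \tr (CK *m (\sum_(t < N) AK ^+ t *m (E *m E^T) *m (AK ^+ t)^T) *m CK^T).
  (* [Defs.] is needed: the probability library also exports a [markov]. *)
  rewrite mulmx_sumr mulmx_suml raddf_sum; apply: eq_bigr => t _.
  by rewrite mxtrace_mulC /Defs.markov -/AK -/CK !trmx_mul !mulmxA.
apply: le_trans trQ; apply: le_trans (lemx_trace output).
exact/lemx_trace/lemx_conj/lemx_lyapunov_sum.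
Qed.

End H2Bound.

Unset Implicit Arguments. Set Strict Implicit.

Theorem lemma4 (R : realType) (n m z q k : nat)
  (A : 'M[R]_n) (B : 'M[R]_(n, m)) (E : 'M[R]_(n, z))
  (C : 'M[R]_(q, n)) (D : 'M[R]_(q, m)) (gamma : R)
  (S : 'I_k -> 'M[R]_(m, n))
  (P : 'M[R]_n) (Q : 'M[R]_q) (X : 'M[R]_n) (L : 'M[R]_(m, n)) :
  0 <= gamma ->
  lin_indep S ->
  is_symmx P -> is_symmx Q ->
  Upsilon S X -> in_span S L ->
  posdef (block_mx (P - E *m E^T) (A *m X + B *m L)
                   (A *m X + B *m L)^T (X + X^T - P)) ->
  posdef (block_mx Q (C *m X + D *m L)
                   (C *m X + D *m L)^T (X + X^T - P)) ->
  posdef P ->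
  \tr Q <= gamma ^+ 2 ->
  X \in unitmx /\
  in_span S (L *m invmx X) /\
  H2_suboptimal A B E C D (L *m invmx X) gamma.
Proof.
move=> _ indep _ _ UpsX spanL pd_blk1 pd_blk2 pdP trQ.
have unitX : X \in unitmx := unitmx_of_block_posdef pdP pd_blk1.
have closed_loop p (F : 'M[R]_(p, n)) (G : 'M[R]_(p, m)) :
    (F *m X + G *m L) *m invmx X = F + G *m (L *m invmx X).
  by rewrite mulmxDl mulmxK // mulmxA.
split => //; split; first exact: in_span_mulmx_invmx.
apply: (H2_suboptimal_of_gramian (posdef_psd pdP)) trQ;
  by rewrite -closed_loop; apply/lemx_of_block_psd/posdef_psd.
Qed.
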